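(* Let $n\ge3$ and $2\le t\le\lceil n/2\rceil$, and let $\mathsf{X}=\mathsf{C}_n(t;i,i+1)$ with $1\le i<t$. Then \[F_2(\mathsf{X})=\begin{cases} n-1 & \text{if } i=1 \text{ and } t=2,\\ (2t-3)(n-t+1) & \text{otherwise.}\end{cases}\]
   Context: $\mathsf{C}_n(t;i,j)$ ($i<j$) denotes the $n$-cycle with vertices $v_1,\dots,v_n$ in cyclic order (edges $v_kv_{k+1}$ and $v_nv_1$), with marked (ramified) vertices $v_1$ and $v_t$, together with one additional edge between $v_i$ and $v_j$. $F_2$ is the number of spanning forests consisting of two trees, one containing $v_1$ and the other containing $v_t$. *)

From mathcomp Require Import all_boot.
Set Implicit Arguments. Unset Strict Implicit. Unset Printing Implicit Defensive.

(* The multigraph C_n(t; i, j): vertices v_1..v_n are encoded as 'I_n with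
   v_k <-> k-1.  Edges are indexed by 'I_(n.+1):
   edge e < n is the cycle edge v_(e+1) v_(e+2) (indices mod n, i.e. 0-indexed
   e -- (e+1) mod n), and edge n is the additional edge v_i v_j.
   The graph may have a parallel edge (e.g. j = i+1); edges are distinct
   objects, so spanning forests are counted as edge subsets of the multigraph. *)
Definition Cn_ends (n i j : nat) (e : nat) : nat * nat :=
  if e < n then (e, (e.+1) %% n) else (i.-1, j.-1).

Definition adjF (n i j : nat) (F : {set 'I_(n.+1)}) : rel 'I_n :=
  fun x y => [exists e in F,
    ((( Cn_ends n i j e).1 == x) && ((Cn_ends n i j e).2 == y)) ||
    (((Cn_ends n i j e).1 == y) && ((Cn_ends n i j e).2 == x))].

(* F is acyclic: every edge of F is a bridge of (V, F), i.e. its endpoints are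
   not connected in (V, F \ {e}).  (A loop would never satisfy this.) *)
Definition acyclicF (n i j : nat) (F : {set 'I_(n.+1)}) : bool :=
  [forall e in F, forall x : 'I_n, forall y : 'I_n,
     ((val x == (Cn_ends n i j e).1) && (val y == (Cn_ends n i j e).2)) ==>
     ~~ connect (adjF i j (F :\ e)) x y].

Definition two_forest (n t i j : nat) (F : {set 'I_(n.+1)}) : bool :=
  acyclicF i j F &&
  [forall r : 'I_n, forall s : 'I_n,
     ((val r == 0) && (val s == t.-1)) ==>
     (~~ connect (adjF i j F) r s &&
      [forall x : 'I_n, connect (adjF i j F) r x || connect (adjF i j F) s x])].

Definition F2 (n t i j : nat) : nat :=
  #|[set F : {set 'I_(n.+1)} | two_forest t i j F]|.

From mathcomp Require Import all_boot zify.
Set Implicit Arguments. Unset Strict Implicit. Unset Printing Implicit Defensive.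

(* Cycle edge k joins k and k+1 mod n; call k its position.  The chord v_i v_(i+1)
   is parallel to cycle edge i-1 and covers the same position.  An edge set is a
   two-forest separating v_1 and v_t iff it keeps at most one edge of the parallel
   pair and leaves exactly two positions uncovered, one on each arc between v_1 and
   v_t: a < t-1 <= b.  Such a forest is determined by a, b and the edge of the pair
   it keeps, a choice that disappears when a = i-1; hence there are
   (2(t-1) - 1)(n-t+1) of them. *)

Section CycleWithChord.

Variables n i : nat.
Hypothesis i_gt0 : 0 < i.
Hypothesis i_lt_n : i < n.

Implicit Types (F G : {set 'I_n.+1}) (e : 'I_n.+1).

Local Notation adj F := (@adjF n i i.+1 F).

Definition position (e : 'I_n.+1) : nat := if e < n then nat_of_ord e else i.-1.

Lemma position_lt e : position e < n.
Proof. by rewrite /position; case: ifP => // _; lia. Qed.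

Lemma position_inord k : k < n -> position (inord k) = k.
Proof. by move=> k_lt; rewrite /position inordK ?k_lt //; lia. Qed.

Lemma position_ord_max : position ord_max = i.-1.
Proof. by rewrite /position /= ltnn. Qed.

Definition covered (F : {set 'I_n.+1}) (k : nat) : bool :=
  [exists e in F, position e == k].

Lemma coveredP F k : reflect (exists2 e, e \in F & position e = k) (covered F k).
Proof.
apply: (iffP existsP) => [[e /andP [eF /eqP ek]]|[e eF ek]]; first by exists e.
by exists e; rewrite eF ek /=.
Qed.

Lemma covered_subset F G k : F \subset G -> covered F k -> covered G k.
Proof.
by move=> /subsetP FG /coveredP [e eF ek]; apply/coveredP; exists e; rewrite ?FG.
Qed.

Lemma covered_edge F k : k < n -> k != i.-1 -> covered F k = (inord k \in F).
Proof.
move=> k_lt ki; apply/coveredP/idP => [[e eF]|kF]; last first.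
  by exists (inord k); rewrite ?position_inord.
rewrite /position; case: ltnP => [e_lt ek | _ ik]; last by rewrite ik eqxx in ki.
by rewrite (_ : inord k = e) //; apply: ord_inj; rewrite inordK; lia.
Qed.

Lemma covered_parallel F : covered F i.-1 = (inord i.-1 \in F) || (ord_max \in F).
Proof.
apply/coveredP/orP => [[e eF]|[twinF|chordF]].
- rewrite /position; case: ltnP => [e_lt ei | e_ge _].
    by left; rewrite (_ : inord i.-1 = e) //; apply: ord_inj; rewrite inordK; lia.
  by right; rewrite (_ : ord_max = e) //; apply: ord_inj; have := ltn_ord e; rewrite /=; lia.
- by exists (inord i.-1); rewrite ?position_inord //; lia.
- by exists ord_max; rewrite ?position_ord_max.
Qed.

Lemma Cn_endsE e : Cn_ends n i i.+1 e = (position e, (position e).+1 %% n).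
Proof.
by rewrite /Cn_ends /position; case: ifP => // _; rewrite prednK // modn_small.
Qed.

Lemma adjFE F x y : adj F x y =
  [exists e in F, ((position e == x) && ((position e).+1 %% n == y)) ||
                  ((position e == y) && ((position e).+1 %% n == x))].
Proof. by apply: eq_existsb => e; rewrite Cn_endsE. Qed.

Lemma connect_adjF_sym F : connect_sym (adj F).
Proof.
by apply: sym_connect_sym => x y; rewrite !adjFE; apply: eq_existsb => e; rewrite orbC.
Qed.

Lemma adjF_covered F k (x y : 'I_n) :
  covered F k -> x = k :> nat -> y = k.+1 %% n :> nat -> adj F x y.
Proof.
case/coveredP => e eF ek xk yk; rewrite adjFE; apply/existsP; exists e.
by rewrite eF ek -yk -xk !eqxx.
Qed.

Lemma modn_succ c : c < n -> c.+1 %% n = if c.+1 < n then c.+1 else 0.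
Proof.
move=> c_lt; case: ifP => [|cn]; first exact: modn_small.
by rewrite (_ : c.+1 = n) ?modnn //; lia.
Qed.

Lemma connect_covered F (x y : 'I_n) :
  x <= y -> (forall k, x <= k < y -> covered F k) -> connect (adj F) x y.
Proof.
move dxy: (y - x) => d; elim: d y dxy => [|d IH] y dxy le_xy cov.
  by rewrite (_ : y = x) //; apply: ord_inj; lia.
have y1_lt : y.-1 < n by have := ltn_ord y; lia.
apply: (@connect_trans _ _ (Ordinal y1_lt)).
  by apply: IH => /= [|| k k_lt]; [lia | lia | apply: cov; lia].
apply: connect1; apply: (@adjF_covered _ y.-1) => //=; first by apply: cov; lia.
by rewrite prednK ?modn_small //; lia.
Qed.

Lemma connect_covered_wrap F (x z : 'I_n) :
  z = 0 :> nat -> (forall k, x <= k < n -> covered F k) -> connect (adj F) x z.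
Proof.
move=> z0 cov; have x_lt := ltn_ord x; have n1_lt : n.-1 < n by lia.
apply: (@connect_trans _ _ (Ordinal n1_lt)).
  by apply: connect_covered => /= [|k k_lt]; [| apply: cov]; lia.
apply: connect1; apply: (@adjF_covered _ n.-1) => //=; first by apply: cov; lia.
by rewrite prednK ?modnn //; lia.
Qed.

Lemma disconnected_uncovered F (x y : 'I_n) :
  x <= y -> ~~ connect (adj F) x y -> exists2 k, x <= k < y & ~~ covered F k.
Proof.
move=> le_xy disc.
have [/existsP [k /andP [k_in nk]]|/existsPn cov] :=
  boolP [exists k : 'I_n, (x <= k < y) && ~~ covered F k]; first by exists k.
case/negP: disc; apply: connect_covered => // k k_in.
have k_lt : k < n by have := ltn_ord y; lia.
by have := cov (Ordinal k_lt); rewrite /= k_in negbK.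
Qed.

Lemma disconnected_uncovered_wrap F (y z : 'I_n) :
  z = 0 :> nat -> ~~ connect (adj F) z y -> exists2 k, y <= k < n & ~~ covered F k.
Proof.
move=> z0 disc.
have [/existsP [k /andP [k_in nk]]|/existsPn cov] :=
  boolP [exists k : 'I_n, (y <= k) && ~~ covered F k].
  by exists k; rewrite ?k_in ?ltn_ord.
case/negP: disc; rewrite connect_adjF_sym; apply: connect_covered_wrap => // k k_in.
have k_lt : k < n by lia.
by have := cov (Ordinal k_lt); rewrite /= negb_and negbK; case/orP => //; lia.
Qed.

Lemma arc_closed F p q : ~~ covered F p -> ~~ covered F q -> p < q < n ->
  closed (adj F) [pred v : 'I_n | p < v <= q].
Proof.
move=> np nq pqn x y; rewrite adjFE => /existsP [e /andP [eF xy]].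
have ep : position e != p by apply: contraNneq np => <-; apply/coveredP; exists e.
have eq : position e != q by apply: contraNneq nq => <-; apply/coveredP; exists e.
have e_lt := position_lt e; rewrite (modn_succ e_lt) in xy; rewrite !inE /=.
by move: xy; case: ifP => wrap /orP [] /andP [/eqP <- /eqP <-]; lia.
Qed.

Lemma connect_arc F p q (x y : 'I_n) : ~~ covered F p -> ~~ covered F q -> p < q < n ->
  connect (adj F) x y -> (p < x <= q) = (p < y <= q).
Proof.
by move=> np nq pqn /(closed_connect (arc_closed np nq pqn)); rewrite !inE.
Qed.

Lemma uncovered_separated F (z s : 'I_n) p q :
  z = 0 :> nat -> (forall v, connect (adj F) z v || connect (adj F) s v) ->
  ~~ covered F p -> ~~ covered F q -> p < q < n -> p < s <= q.
Proof.
move=> z0 span np nq pqn; have p1_lt : p.+1 < n by lia.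
have arc := connect_arc np nq pqn.
by case/orP: (span (Ordinal p1_lt)) => /arc /=; lia.
Qed.

Definition parallel_free F : bool := ~~ ((inord i.-1 \in F) && (ord_max \in F)).

Lemma position_inj F : parallel_free F -> {in F &, injective position}.
Proof.
move=> pf e1 e2 e1F e2F.
have twin e : e = i.-1 :> nat -> inord i.-1 = e.
  by move=> ei; apply: ord_inj; rewrite ei inordK //; lia.
have chord e : n <= e -> ord_max = e.
  by move=> e_ge; apply: ord_inj => /=; have := ltn_ord e; lia.
rewrite /position; case: (ltnP e1 n) => e1n; case: (ltnP e2 n) => e2n same.
- exact: ord_inj.
- by move: pf; rewrite /parallel_free (twin e1) ?(chord e2) ?e1F ?e2F.
- by move: pf; rewrite /parallel_free (twin e2) ?(chord e1) ?e1F ?e2F.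
- by rewrite -(chord e1) ?(chord e2).
Qed.

Lemma uncovered_setD1 F e : parallel_free F -> e \in F -> ~~ covered (F :\ e) (position e).
Proof.
move=> pf eF; apply/coveredP => [[e' /setD1P [ne e'F] same]].
by move: ne; rewrite (position_inj pf e'F eF same) eqxx.
Qed.

Lemma acyclicF_parallel_free F : acyclicF i i.+1 F -> parallel_free F.
Proof.
move=> acyc; apply/negP => /andP [twinF chordF]; have i1_lt : i.-1 < n by lia.
move/forall_inP/(_ _ chordF)/forallP/(_ (Ordinal i1_lt))/forallP/(_ (Ordinal i_lt_n)): acyc.
rewrite Cn_endsE position_ord_max prednK // modn_small // !eqxx /=.
case/negP; apply: connect1; apply: (@adjF_covered _ i.-1) => //=; last first.
  by rewrite prednK // modn_small.
apply/coveredP; exists (inord i.-1); last exact: position_inord.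
by rewrite !inE twinF andbT; apply/eqP => /(congr1 val) /=; rewrite inordK; lia.
Qed.

Lemma acyclicF_uncovered F a :
  a < n -> ~~ covered F a -> parallel_free F -> acyclicF i i.+1 F.
Proof.
move=> a_lt na pf; apply/forall_inP => e eF; apply/forallP => x; apply/forallP => y.
apply/implyP => /andP [/eqP xe /eqP ye]; rewrite Cn_endsE /= in xe ye.
have ne := uncovered_setD1 pf eF.
have na' : ~~ covered (F :\ e) a by apply: contra na; apply/covered_subset/subsetDl.
have ea : position e != a by apply: contraNneq na => <-; apply/coveredP; exists e.
have e_lt := position_lt e; rewrite (modn_succ e_lt) in ye.
have x_lt := ltn_ord x; have y_lt := ltn_ord y.
apply/negP => conn; case: (ltngtP (position e) a) => [lt|gt|eq]; last by rewrite eq eqxx in ea.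
- have arc : position e < a < n by lia.
  by have := connect_arc ne na' arc conn; move: ye; case: ifP; lia.
- have arc : a < position e < n by lia.
  by have := connect_arc na' ne arc conn; move: ye; case: ifP; lia.
Qed.

Definition cut_forest (a b : nat) (c : bool) : {set 'I_n.+1} :=
  [set e : 'I_n.+1 | (e : nat) \notin [:: a; b; if c then i.-1 else n]].

Lemma parallel_free_cut a b c : parallel_free (cut_forest a b c).
Proof.
rewrite /parallel_free !inE /= inordK; last lia.
by case: c; rewrite eqxx !orbT ?andbF.
Qed.

Lemma chord_in_cut a b c : a < n -> b < n -> (ord_max \in cut_forest a b c) = c.
Proof. by rewrite inE /=; case: c; rewrite !inE; lia. Qed.

Lemma covered_cut a b c k : a < n -> b < n -> ~~ (c && (i.-1 \in [:: a; b])) ->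
  k < n -> covered (cut_forest a b c) k = (k != a) && (k != b).
Proof.
move=> a_lt b_lt hc k_lt; have [->|ki] := eqVneq k i.-1.
  rewrite covered_parallel !inE /= inordK; last lia.
  by move: hc; case: c; rewrite !inE; lia.
by rewrite covered_edge // !inE /= inordK //; case: c hc; lia.
Qed.

Lemma eq_cut_forest F a b : a < n -> b < n -> parallel_free F ->
  (forall k, k < n -> covered F k = (k != a) && (k != b)) ->
  F = cut_forest a b (ord_max \in F).
Proof.
move=> a_lt b_lt pf cov; apply/setP => e; rewrite inE.
have [e_lt|e_ge] := ltnP e n; last first.
  have -> : e = ord_max by apply: ord_inj => /=; have := ltn_ord e; lia.
  by case: (ord_max \in F); rewrite !inE /=; lia.
rewrite -{1}(inord_val e); have [ei|ei] := eqVneq (e : nat) i.-1.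
  move: pf (cov _ e_lt); rewrite /parallel_free ei covered_parallel.
  by case: (inord i.-1 \in F); case: (ord_max \in F); rewrite !inE; lia.
by rewrite -covered_edge // cov //; case: (ord_max \in F); rewrite !inE; lia.
Qed.

Section TwoForests.

Variable t : nat.
Hypothesis i_lt_t : i < t.
Hypothesis t_lt_n : t < n.

Let v1 : 'I_n := Ordinal (ltn_trans i_gt0 i_lt_n).
Let vt : 'I_n := Ordinal (leq_ltn_trans (leq_pred t) t_lt_n).

Lemma two_forestE F : two_forest t i i.+1 F =
  [&& acyclicF i i.+1 F, ~~ connect (adj F) v1 vt &
      [forall x, connect (adj F) v1 x || connect (adj F) vt x]].
Proof.
rewrite /two_forest; congr (_ && _).
apply/forallP/idP => [/(_ v1)/forallP/(_ vt)/implyP|sep r].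
  by apply; apply/andP; split; apply/eqP; reflexivity.
apply/forallP => s; apply/implyP => /andP [/eqP r1 /eqP st].
have -> : r = v1 by apply: ord_inj.
by have -> : s = vt by apply: ord_inj.
Qed.

Lemma cut_two_forest a b c : a < t.-1 <= b -> b < n -> ~~ ((a == i.-1) && c) ->
  two_forest t i i.+1 (cut_forest a b c).
Proof.
move=> ab b_lt hac.
have cov k : k < n -> covered (cut_forest a b c) k = (k != a) && (k != b).
  by move=> k_lt; apply: covered_cut; rewrite ?inE; [lia | lia | case: c hac; lia | lia].
have na : ~~ covered (cut_forest a b c) a by rewrite cov; lia.
have nb : ~~ covered (cut_forest a b c) b by rewrite cov; lia.
have ab_n : a < b < n by lia.
rewrite two_forestE; apply/and3P; split.
- by apply: (acyclicF_uncovered (a := a)); [lia | | exact: parallel_free_cut].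
- by apply/negP => /(connect_arc na nb ab_n) /=; lia.
apply/forallP => v; have v_lt := ltn_ord v.
have [va|av] := leqP v a.
  by apply/orP; left; apply: connect_covered => // k k_in; rewrite cov; lia.
have [vb|bv] := leqP v b; last first.
  apply/orP; left; rewrite connect_adjF_sym.
  by apply: connect_covered_wrap => // k k_in; rewrite cov; lia.
apply/orP; right; have [tv|v_lt_t] := leqP t.-1 v.
  by apply: connect_covered => [//|k /= k_in]; rewrite cov; lia.
rewrite connect_adjF_sym; apply: connect_covered => /= [|k k_in]; first lia.
by rewrite cov; lia.
Qed.

Lemma two_forest_cut F : two_forest t i i.+1 F ->
  exists a b, [/\ a < t.-1 <= b, b < n, ~~ ((a == i.-1) && (ord_max \in F))
                & F = cut_forest a b (ord_max \in F)].
Proof.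
rewrite two_forestE => /and3P [acyc disc /forallP span].
have [a a_in na] := disconnected_uncovered (leq0n _ : v1 <= vt) disc.
have [b b_in nb] := disconnected_uncovered_wrap (erefl : v1 = 0 :> nat) disc.
have sep := uncovered_separated (erefl : v1 = 0 :> nat) span.
rewrite /= in a_in b_in sep.
have cov k : k < n -> covered F k = (k != a) && (k != b).
  move=> k_lt; apply/idP/idP => [covk|/andP [ka kb]].
    by apply/andP; split; apply: contraTneq covk => ->; [exact: na | exact: nb].
  apply: contraT => nk.
  by move: (sep _ _ nk na) (sep _ _ na nk) (sep _ _ nk nb) (sep _ _ nb nk); lia.
exists a, b; split; [lia | lia | |].
  by apply: contra na => /andP [/eqP -> chordF]; rewrite covered_parallel chordF orbT.
by apply: eq_cut_forest; [lia | lia | exact: acyclicF_parallel_free |].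
Qed.

Definition code_domain : {set 'I_t.-1 * bool * 'I_(n - t + 1)} :=
  [set p : 'I_t.-1 * bool * 'I_(n - t + 1) | ~~ ((p.1.1 == i.-1 :> nat) && p.1.2)].

Definition forest_of_code (p : 'I_t.-1 * bool * 'I_(n - t + 1)) : {set 'I_n.+1} :=
  cut_forest p.1.1 (t.-1 + p.2) p.1.2.

Lemma card_code_domain : #|code_domain| = (2 * t - 3) * (n - t + 1).
Proof.
have i1_lt : i.-1 < t.-1 by lia.
have -> : code_domain = setX [set~ (Ordinal i1_lt, true)] setT.
  apply/setP => [[[a c] b]]; rewrite !inE andbT xpair_eqE -val_eqE /=.
  by case: c; rewrite ?andbT ?andbF.
by rewrite cardsX cardsC1 cardsT card_prod !card_ord card_bool; lia.
Qed.

Lemma forest_of_code_inj : {in code_domain &, injective forest_of_code}.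
Proof.
have cov p k : p \in code_domain -> k < n ->
    covered (forest_of_code p) k = (k != p.1.1) && (k != t.-1 + p.2).
  case: p => [[a c] b]; rewrite inE /= => dom k_lt.
  have a_lt := ltn_ord a; have b_lt := ltn_ord b.
  by apply: covered_cut; rewrite /= ?inE; [lia | lia | case: c dom; lia | lia].
move=> [[a c] b] [[a' c'] b'] dom dom' same.
have a_lt := ltn_ord a; have a'_lt := ltn_ord a'.
have b_lt := ltn_ord b; have b'_lt := ltn_ord b'.
have ab k : k < n -> (k != a) && (k != t.-1 + b) = (k != a') && (k != t.-1 + b').
  by move=> k_lt; rewrite -(cov _ _ dom) // -(cov _ _ dom') // same.
have aa' : a = a' :> nat by have := ab a; lia.
have bb' : b = b' :> nat by have := ab (t.-1 + b); lia.
have cc' : c = c'.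
  have a_n : a < n by lia.
  have b_n : t.-1 + b < n by lia.
  rewrite /forest_of_code /= in same.
  by rewrite -(chord_in_cut c a_n b_n) same chord_in_cut //; lia.
by rewrite cc' (ord_inj aa') (ord_inj bb').
Qed.

Lemma two_forests_image :
  [set F | two_forest t i i.+1 F] = forest_of_code @: code_domain.
Proof.
apply/setP => F; rewrite inE; apply/idP/imsetP => [|[[[a c] b] dom ->]].
  case/two_forest_cut => a [b [ab b_lt dom eqF]].
  have a_lt : a < t.-1 by lia.
  have b_lt' : b - t.-1 < n - t + 1 by lia.
  exists (Ordinal a_lt, ord_max \in F, Ordinal b_lt'); first by rewrite inE.
  by rewrite {1}eqF /forest_of_code /= subnKC //; lia.
have a_lt := ltn_ord a; have b_lt := ltn_ord b; rewrite inE in dom.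
by apply: cut_two_forest => //=; lia.
Qed.

Lemma card_two_forests : F2 n t i i.+1 = (2 * t - 3) * (n - t + 1).
Proof.
by rewrite /F2 two_forests_image (card_in_imset forest_of_code_inj) card_code_domain.
Qed.

End TwoForests.

End CycleWithChord.

Theorem lemma7p5 (n t i : nat) :
  3 <= n -> 2 <= t -> t <= uphalf n -> 1 <= i -> i < t ->
  F2 n t i i.+1 =
    (if (i == 1) && (t == 2) then n - 1 else (2 * t - 3) * (n - t + 1)).
Proof.
move=> n_ge3 _ t_le i_gt0 i_lt_t.
have t_lt_n : t < n by move: t_le; rewrite uphalfE -divn2; lia.
rewrite (card_two_forests i_gt0 (ltn_trans i_lt_t t_lt_n) i_lt_t t_lt_n).
(* The exceptional case [i = 1], [t = 2] is an instance of the general formula. *)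
by case: ifP => // /andP [_ /eqP ->]; lia.
Qed.
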